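(* Let $\mu$ be a $(C,\gamma)$-absolutely decaying measure on $\mathbb{R}$, let $K=\operatorname{supp}\mu$, and let $0<\alpha\le\frac14\left(\frac{1}{3C}\right)^{1/\gamma}$. Then for every bi-Lipschitz map $\varphi:\mathbb{R}\to\mathbb{R}$, every integer $b\ge2$ and every $c,y\in\mathbb{T}$, the set $\varphi\big(\pi^{-1}(E(f_{b,c},y))\big)$ is $\alpha$-winning on $K$.
   Context: $\mathbb{T}=\mathbb{R}/\mathbb{Z}$, $\pi:\mathbb{R}\to\mathbb{T}$ the projection. For $b\in\mathbb{Z}_{\ge2}$ and $c\in\mathbb{T}$, $f_{b,c}:\mathbb{T}\to\mathbb{T}$ is $x\mapsto bx+c$. For $f:\mathbb{T}\to\mathbb{T}$ and $y\in\mathbb{T}$, $E(f,y)=\{x\in\mathbb{T}: y\notin\overline{\{f^n(x):n\in\mathbb{N}\}}\}$. $B(x,\rho)$ denotes the closed ball. A locally finite Borel measure $\mu$ on $\mathbb{R}$ is $(C,\gamma)$-absolutely decaying if there is $\rho_0>0$ such that for all $0<\rho\le\rho_0$, $x\in\operatorname{supp}\mu$, $y\in\mathbb{R}$, $\varepsilon>0$: $\mu(B(x,\rho)\cap B(y,\varepsilon\rho))<C\varepsilon^\gamma\mu(B(x,\rho))$. A map $\varphi$ is bi-Lipschitz if there is $L\ge1$ with $L^{-1}\le|\varphi(x)-\varphi(y)|/|x-y|\le L$ for all $x\ne y$. Schmidt's game on a complete metric space $(X,d)$ with parameters $0<\alpha,\beta<1$ and target $S\subset X$: on $X\times\mathbb{R}_+$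 write $(x_2,\rho_2)\le_s(x_1,\rho_1)$ if $\rho_2+d(x_1,x_2)\le\rho_1$. Bob picks $\omega_1=(x_1,\rho_1)$; then Alice and Bob alternately pick $\omega_k'=(x_k',\rho_k')\le_s\omega_k$ with $\rho_k'=\alpha\rho_k$ and $\omega_{k+1}\le_s\omega_k'$ with $\rho_{k+1}=\beta\rho_k'$. The nested closed balls intersect in a point $x_\infty$; Alice wins if $x_\infty\in S$. $S$ is $\alpha$-winning if for every $\beta\in(0,1)$ Alice has a strategy winning against all plays of Bob. For closed $K\subset\mathbb{R}$, $S\subset\mathbb{R}$ is $\alpha$-winning on $K$ if $S\cap K$ is $\alpha$-winning for the game played on $K$ with the induced metric. *)

From mathcomp Require Import all_boot all_order all_algebra.
From mathcomp Require Import all_classical all_reals all_analysis.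
Set Implicit Arguments.
Unset Strict Implicit.
Unset Printing Implicit Defensive.
Import Order.TTheory GRing.Theory Num.Theory.
Local Open Scope classical_set_scope.
Local Open Scope ring_scope.

Section Defs.
Variable R : realType.

Definition cball (x r : R) : set R := [set z | `|z - x| <= r].

(** Locally finite (Borel) measure: finite on every (closed) ball.
    Measures on [R] in MathComp-Analysis are defined on the Borel
    sigma-algebra of [R]. *)
Definition locally_finite (mu : {measure set R -> \bar R}) : Prop :=
  forall x r : R, (mu (cball x r) < +oo)%E.

Definition msupport (mu : {measure set R -> \bar R}) : set R :=
  [set x | forall r : R, 0 < r -> (0 < mu (cball x r))%E].

Definition abs_decaying (mu : {measure set R -> \bar R}) (C gam : R) : Prop :=
  exists rho0 : R, 0 < rho0 /\
    forall (rho x y eps : R), 0 < rho -> rho <= rho0 -> msupport mu x ->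
      0 < eps ->
      (mu (cball x rho `&` cball y (eps * rho))
        < (C * eps `^ gam)%:E * mu (cball x rho))%E.

Definition bi_Lipschitz (phi : R -> R) : Prop :=
  exists L : R, 1 <= L /\
    forall x y : R, x != y ->
      L^-1 <= `|phi x - phi y| / `|x - y| <= L.

(** The torus T = R/Z is handled through lifts: for u v : R,
    [torus_close u v eps] means d_T(pi u, pi v) < eps, where d_T is the
    quotient metric d_T(pi u, pi v) = min_{k in Z} |u - v - k|. *)
Definition torus_close (u v eps : R) : Prop :=
  exists k : int, `|u - v - k%:~R| < eps.

(** Lift of f_{b,c} : x |-> b x + c to R (c a lift of the translation). *)
Definition fbc (b : nat) (c : R) (x : R) : R := b%:R * x + c.

(** [pi y] lies in the closure of the forward orbit {f^n (pi x) : n in N}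
    of pi x under f_{b, pi c}  (N = {0,1,2,...}). *)
Definition in_orbit_closure (b : nat) (c x y : R) : Prop :=
  forall eps : R, 0 < eps ->
    exists n : nat, torus_close (iter n (fbc b c) x) y eps.

(** pi^{-1}(E(f_{b, pi c}, pi y)) as a subset of R. *)
Definition E_lift (b : nat) (c y : R) : set R :=
  [set x | ~ in_orbit_closure b c x y].

(** formal balls (center, radius); (x2,r2) <=_s (x1,r1) *)
Definition ball_le (w2 w1 : R * R) : Prop := w2.2 + `|w1.1 - w2.1| <= w1.2.

(** A strategy for Alice: from the list of Bob's moves omega_1..omega_k
    (all earlier moves of Alice being determined by the strategy itself),
    it outputs Alice's move omega_k'. *)
Definition strategy := seq (R * R) -> R * R.

(** Alice's answer to Bob's k-th move (index k counted from 0). *)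
Definition alice_move (sigma : strategy) (omega : nat -> R * R) (k : nat) :=
  sigma (mkseq omega k.+1).

Definition bob_legal_upto (K : set R) (beta : R) (sigma : strategy)
    (omega : nat -> R * R) (n : nat) : Prop :=
  K (omega 0).1 /\ 0 < (omega 0).2 /\
  forall j : nat, (j < n)%N ->
    K (omega j.+1).1 /\ ball_le (omega j.+1) (alice_move sigma omega j) /\
    (omega j.+1).2 = beta * (alice_move sigma omega j).2.

Definition alice_legal (K : set R) (alpha beta : R) (sigma : strategy) : Prop :=
  forall (omega : nat -> R * R) (n : nat), bob_legal_upto K beta sigma omega n ->
    K (alice_move sigma omega n).1 /\
    ball_le (alice_move sigma omega n) (omega n) /\
    (alice_move sigma omega n).2 = alpha * (omega n).2.

Definition alice_wins (K : set R) (beta : R) (sigma : strategy) (S : set R)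
    : Prop :=
  forall omega : nat -> R * R, (forall n, bob_legal_upto K beta sigma omega n) ->
    forall x : R, K x -> (forall k, `|x - (omega k).1| <= (omega k).2) -> S x.

(** S is alpha-winning on K (i.e. S `&` K is alpha-winning for the game
    played on K with the induced metric). *)
Definition alpha_winning_on (K : set R) (alpha : R) (S : set R) : Prop :=
  forall beta : R, 0 < beta -> beta < 1 ->
    exists sigma : strategy,
      alice_legal K alpha beta sigma /\ alice_wins K beta sigma (S `&` K).

End Defs.

From mathcomp Require Import all_boot all_order all_algebra.
From mathcomp Require Import all_classical all_reals all_analysis.
From mathcomp Require Import ring lra zify.
Set Implicit Arguments.
Unset Strict Implicit.
Unset Printing Implicit Defensive.
Import Order.TTheory GRing.Theory Num.Theory numFieldNormedType.Exports.
Local Open Scope classical_set_scope.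
Local Open Scope ring_scope.

(* Alice answers each ball of radius [rho] by a ball that keeps, at distance
   [2 al rho], away from the image under [phi] of the lift of a preimage
   [f^-n(y)] whose scale [b^-n] is comparable to [rho]. Absolute decay of [mu]
   makes such a move possible inside the support: the half ball [B(z, rho/2)]
   cannot carry all its mass in [B(p, 2 al rho)]. A single point needs to be
   avoided at each step, because lifts of preimages at nearby scales [n] and
   [n + j] differ by [b^-(n+j) (y - f^j(y) + m)] with [m] an integer, which
   vanishes or is bounded below uniformly in [j <= N]. If the outcome were
   [phi u] with [y] in the orbit closure of [u], then [u] would be very close
   to such a lift at some scale, and Alice's ball at that scale excludes it. *)

Section decaying_measure.
Variables (R : realType) (mu : {measure set R -> \bar R}).

Lemma cball_itv (x r : R) : cball x r = `[x - r, x + r]%classic.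
Proof.
by apply/seteqP; split => z /=; rewrite /cball /= in_itv /= distrC ler_distlC.
Qed.

Lemma measurable_cball (x r : R) : measurable (cball x r).
Proof. by rewrite cball_itv; exact: measurable_itv. Qed.

Lemma negligible_seq_union (T : eqType) (F : T -> set R) (s : seq T) :
  (forall i, i \in s -> mu.-negligible (F i)) ->
  mu.-negligible [set x | exists2 i, i \in s & F i x].
Proof.
elim: s => [_|a s IH Fneg].
  by apply: (negligibleS _ (negligible_set0 mu)) => x [i].
apply: (@negligibleS _ _ _ _ (F a `|` [set x | exists2 i, i \in s & F i x])).
  move=> x [i]; rewrite in_cons => /orP[/eqP -> Fax|si Fix]; first by left.
  by right; exists i.
apply: negligibleU; first by apply: Fneg; rewrite mem_head.
by apply: IH => i si; apply: Fneg; rewrite in_cons si orbT.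
Qed.

Lemma compact_negligible_off_support (A : set R) : compact A ->
  (forall z, A z -> ~ msupport mu z) -> mu.-negligible A.
Proof.
move=> cA offA.
have null_ball z : A z -> exists r : R, 0 < r /\ mu (cball z r) = 0%E.
  move=> /offA /existsNP[r /not_implyP[r0 /negP]]; rewrite -leNgt => mu0.
  by exists r; split => //; apply/eqP; rewrite eq_le mu0 measure_ge0.
pose rad z := xget 1 [set r : R | 0 < r /\ mu (cball z r) = 0%E].
have radP z : A z -> 0 < rad z /\ mu (cball z (rad z)) = 0%E.
  by move=> Az; exact: (xgetPex 1 (null_ball z Az)).
move: cA; rewrite compact_cover => /(_ R A (fun z => ball z (rad z))) [].
- by move=> z _; exact: ball_open.
- by move=> z Az; exists z => //; apply: ballxx; exact: (radP z Az).1.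
move=> D DA AD; apply: (negligibleS AD).
have Dneg : mu.-negligible
    [set x | exists2 i, i \in finmap.enum_fset D & ball i (rad i) x].
  apply: negligible_seq_union => i iD.
  have [_ mu0] := radP i (set_mem (DA i iD)).
  exists (cball i (rad i)); split => //; first exact: measurable_cball.
  by move=> x /ltW; rewrite /cball /= distrC.
by apply: (negligibleS _ Dneg) => x [i /= iD bx]; exists i.
Qed.

Definition abs_decaying_upto (C gam rho0 : R) := forall rho x y eps : R,
  0 < rho -> rho <= rho0 -> msupport mu x -> 0 < eps ->
  (mu (cball x rho `&` cball y (eps * rho)) < (C * eps `^ gam)%:E * mu (cball x rho))%E.

Lemma abs_decaying_gt1 (C gam : R) (z : R) : locally_finite mu ->
  abs_decaying mu C gam -> msupport mu z -> 1 < C.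
Proof.
move=> mu_fin [rho0 [rho0_gt0 mu_decay]] Kz.
have := mu_decay rho0 z z 1 rho0_gt0 (lexx _) Kz ltr01.
rewrite mul1r setIid powR1.
have := Kz rho0 rho0_gt0; have := mu_fin z rho0.
case: (mu (cball z rho0)) (measure_ge0 mu (cball z rho0)) => //= m m0 _.
by rewrite !lte_fin mulr1; nra.
Qed.

Section escape.
Variables (C gam rho0 al : R).
Hypothesis mu_fin : locally_finite mu.
Hypothesis mu_decay : abs_decaying_upto C gam rho0.
Hypothesis al_gt0 : 0 < al.
Hypothesis decay_al : C * (4 * al) `^ gam <= 1.

(* Were the support in [cball z (rho/2)] all within [2 al rho] of [p], the ball
   [cball p (2 al rho)] would carry all the mass of [cball z (rho/2)], against
   the decay estimate with [eps = 4 al]. *)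
Lemma support_escape z rho p : msupport mu z -> 0 < rho -> rho <= rho0 ->
  exists w, msupport mu w /\ `|w - z| <= rho / 2 /\ 2 * al * rho <= `|w - p|.
Proof.
move=> Kz rho_gt0 rho_le; apply: contrapT => noesc.
pose r := 2 * al * rho.
have rE : r = 2 * al * rho by [].
have r_ge0 : 0 <= r by rewrite /r !mulr_ge0 // ltW.
pose F := (`[z - rho / 2, Num.min (p - r) (z + rho / 2)] `|`
   `[Num.max (p + r) (z - rho / 2), z + rho / 2])%classic.
have Fneg : mu.-negligible F.
  apply: compact_negligible_off_support.
    by apply: compactU; exact: segment_compact.
  move=> w Fw Kw; apply: noesc; exists w; split => //.
  case: Fw; rewrite /= in_itv /= ?le_min ?ge_max.
  - move=> /andP[lo /andP[hp hz]].
    by split; [rewrite distrC ler_distlC lo hz | rewrite ler0_norm; lra].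
  - move=> /andP[/andP[hp lo] hz].
    by split; [rewrite distrC ler_distlC lo hz | rewrite ger0_norm; lra].
have [N [mN muN FN]] := Fneg.
pose B := cball z (rho / 2).
have rho2_gt0 : 0 < rho / 2 by lra.
have BN : B `<=` N `|` (B `&` cball p r).
  move=> w Bw; case: (leP `|w - p| r) => wp; first by right.
  left; apply: FN; move: Bw wp; rewrite /B /cball /= distrC ler_distlC.
  case: (leP (w - p) 0) => wp0 /andP[? ?].
    by rewrite ler0_norm // => ?; left; rewrite /= in_itv /= le_min; lra.
  by rewrite gtr0_norm // => ?; right; rewrite /= in_itv /= ge_max; lra.
have muB : (mu B <= mu (B `&` cball p r))%E.
  have mBp : measurable (B `&` cball p r).
    by apply: measurableI; exact: measurable_cball.
  apply: le_trans (le_measure _ _ _ BN) _; rewrite ?inE.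
  - exact: measurable_cball.
  - exact: measurableU.
  apply: le_trans (measureU2 _ _ _) _ => //.
  by rewrite [X in (X + _)%E](_ : _ = 0%E) ?add0e //; exact: muN.
have dec : (mu (B `&` cball p r) < (C * (4 * al) `^ gam)%:E * mu B)%E.
  have -> : r = 4 * al * (rho / 2) by rewrite rE; field.
  by apply: mu_decay => //; [lra | rewrite mulr_gt0].
move: (le_lt_trans muB dec) (Kz _ rho2_gt0) (mu_fin z (rho / 2)); rewrite -/B.
case: (mu B) (measure_ge0 mu B) => //= m _; have := decay_al.
by rewrite !lte_fin => ? ? ? _; nra.
Qed.
End escape.
End decaying_measure.

Section real_facts.
Variable R : realType.

Lemma small_alpha_bounds (C gam al : R) : 1 < C -> 0 < gam -> 0 < al ->
  al <= 4^-1 * ((3 * C)^-1) `^ (gam^-1) ->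
  C * (4 * al) `^ gam <= 1 /\ al <= 4^-1.
Proof.
move=> C_gt1 gam_gt0 al_gt0 al_le.
have a4_le : 4 * al <= ((3 * C)^-1) `^ (gam^-1) by lra.
have a4_nneg : 4 * al \in Num.nneg by rewrite nnegrE; lra.
have a4_pow : (4 * al) `^ gam <= (3 * C)^-1.
  have := ge0_ler_powR (ltW gam_gt0) a4_nneg (powR_ge0 _ _) a4_le.
  by rewrite -powRrM mulVf ?gt_eqF // powRr1 // invr_ge0; lra.
have C3 : C * (3 * C)^-1 = 3^-1 by field; lra.
have Ca4 : C * (4 * al) `^ gam <= 3^-1 by rewrite -C3 ler_wpM2l //; lra.
split; first lra.
rewrite leNgt; apply/negP => a4_gt1.
have : 1 < (4 * al) `^ gam.
  have := gt0_ltr_powR gam_gt0 (ler01 : 1 \in Num.nneg) a4_nneg.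
  by rewrite powR1 /=; apply; lra.
have : (3 * C)^-1 < 1 by rewrite invf_lt1; lra.
lra.
Qed.

Lemma exists_geometric_bracket (t A v : R) : 0 < t -> t < 1 -> 0 < v -> v <= A ->
  exists m : nat, A * t ^+ m.+1 < v /\ v <= A * t ^+ m.
Proof.
move=> t_gt0 t_lt1 v_gt0 vA.
have A_gt0 : 0 < A by lra.
have t_norm : `|t| < 1 by rewrite gtr0_norm.
have [M _ tM] := cvgr_dist_lt _ _ (cvg_expr t_norm) _ (divr_gt0 v_gt0 A_gt0).
have small : exists n, A * t ^+ n < v.
  exists M; have := tM M (leqnn M); rewrite /= sub0r normrN.
  by rewrite ger0_norm ?exprn_ge0 ?ltW // ltr_pdivlMr // mulrC.
case: (ex_minnP small) => -[|m] below minimal.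
  by move: below; rewrite expr0 mulr1; lra.
exists m; split => //; rewrite leNgt; apply/negP.
by move=> /minimal; rewrite ltnn.
Qed.

Lemma exists_natX_ge (x : R) (b : nat) : (1 < b)%N -> exists N : nat, x <= b%:R ^+ N.
Proof.
move=> b_gt1; exists (Num.bound `|x|); apply: le_trans (ler_norm x) _.
apply: le_trans (ltW (archi_boundP (normr_ge0 x))) _.
by rewrite -natrX ler_nat ltnW // ltn_expl.
Qed.

End real_facts.

Section bi_Lipschitz.
Variable R : realType.

Lemma bi_Lipschitz_bounds (phi : R -> R) : bi_Lipschitz phi -> exists L : R, 1 <= L /\
  (forall u v, `|phi u - phi v| <= L * `|u - v|) /\
  (forall u v, `|u - v| <= L * `|phi u - phi v|).
Proof.
move=> [L [L_ge1 Lphi]]; exists L; split => //.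
have L_gt0 : 0 < L by lra.
split=> u v; have [->|uv] := eqVneq u v; rewrite ?subrr ?normr0 ?mulr0 ?mulr_ge0 //.
- have uv_gt0 : 0 < `|u - v| by rewrite normr_gt0 subr_eq0.
  by have /andP[_] := Lphi u v uv; rewrite ler_pdivrMr.
- have uv_gt0 : 0 < `|u - v| by rewrite normr_gt0 subr_eq0.
  have /andP[+ _] := Lphi u v uv; rewrite ler_pdivlMr // => Luv.
  by rewrite -ler_pdivrMl // mulrC.
Qed.

Lemma lipschitz_continuous (phi : R -> R) (L : R) : 0 < L ->
  (forall u v, `|phi u - phi v| <= L * `|u - v|) -> continuous phi.
Proof.
move=> L_gt0 Lphi x; apply/cvgrPdist_lt => e e_gt0; near=> t.
apply: le_lt_trans (Lphi x t) _; rewrite -ltr_pdivlMl //; near: t.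
apply/nbhs_ballP; exists (e / L) => /=; first exact: divr_gt0.
by move=> t; rewrite /ball /= mulrC.
Unshelve. all: by end_near.
Qed.

Lemma between_far_sides (p a a' w : R) : (a < p < a') || (a' < p < a) ->
  `|w - p| < `|a - p| -> `|w - p| < `|a' - p| ->
  Num.min a a' <= w <= Num.max a a'.
Proof.
rewrite ge_min le_max; case/orP => /andP[ap pa'].
  rewrite (ltr0_norm (x := a - p)) ?subr_lt0 // (gtr0_norm (x := a' - p)) ?subr_gt0 //.
  by rewrite !ltr_norml; lra.
rewrite (gtr0_norm (x := a - p)) ?subr_gt0 // (ltr0_norm (x := a' - p)) ?subr_lt0 //.
by rewrite !ltr_norml; lra.
Qed.

(* A bi-Lipschitz map is continuous and injective, hence strictly monotone on
   [[-M, M]]; it moves [+-M] by more than [|w - phi 0|] away from [phi 0], on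
   opposite sides, so the intermediate value theorem reaches [w]. *)
Lemma bi_Lipschitz_surj (phi : R -> R) :
  bi_Lipschitz phi -> forall w, exists u, phi u = w.
Proof.
move=> /bi_Lipschitz_bounds[L [L_ge1 [Lphi Lphi']]] w.
have L_gt0 : 0 < L by lra.
pose M := L * (`|w - phi 0| + 1).
have M_gt0 : 0 < M by rewrite mulr_gt0 // ltr_pwDr // normr_ge0.
have far t : `|t| = M -> `|w - phi 0| < `|phi t - phi 0|.
  move=> tM; have := Lphi' t 0; rewrite subr0 tM -ler_pdivrMl // => ge.
  by apply: lt_le_trans ge; rewrite /M mulKf ?gt_eqF // ltrDl.
have inj : {in `[- M, M] &, injective phi}.
  move=> u v _ _ e; apply/eqP; rewrite -subr_eq0 -normr_eq0 eq_le normr_ge0 andbT.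
  by have := Lphi' u v; rewrite e subrr normr0 mulr0.
have cphi : {within [set` `[- M, M]], continuous phi}.
  by apply: continuous_subspaceT; exact: lipschitz_continuous Lphi.
have sides : (phi (- M) < phi 0 < phi M) || (phi M < phi 0 < phi (- M)).
  have inI t : - M <= t -> t <= M -> t \in `[- M, M].
    by move=> ? ?; rewrite in_itv /=; apply/andP.
  have [mono|mono] := itv_continuous_inj_mono cphi inj.
  - have m1 : phi (- M) < phi 0 by apply: mono; [apply: inI|apply: inI|]; lra.
    have m2 : phi 0 < phi M by apply: mono; [apply: inI|apply: inI|]; lra.
    by rewrite m1 m2.
  - have m1 : phi 0 < phi (- M) by apply: mono; [apply: inI|apply: inI|]; lra.
    have m2 : phi M < phi 0 by apply: mono; [apply: inI|apply: inI|]; lra.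
    by rewrite m1 m2 orbT.
have far_l : `|w - phi 0| < `|phi (- M) - phi 0| by apply: far; rewrite normrN gtr0_norm.
have far_r : `|w - phi 0| < `|phi M - phi 0| by apply: far; rewrite gtr0_norm.
have MM : - M <= M by lra.
have [u _ <-] := IVT MM cphi (between_far_sides sides far_l far_r).
by exists u.
Qed.
End bi_Lipschitz.

Section integer_translates.
Variable R : realType.

Definition int_gap (t d : R) := forall m : int, t + m%:~R != 0 -> d <= `|t + m%:~R|.

Lemma int_shift_gap (t : R) : exists2 d : R, 0 < d & int_gap t d.
Proof.
pose fr := t - (Num.floor t)%:~R.
have fr_ge0 : 0 <= fr by rewrite subr_ge0 floor_le.
have fr_lt1 : fr < 1 by have := floorD1_gt t; rewrite intrD /fr; lra.
pose d := if fr == 0 then 1 else Num.min fr (1 - fr).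
have d_gt0 : 0 < d by rewrite /d; case: eqP => fr0; rewrite ?lt_min; lra.
have d_le1 : d <= 1 - fr.
  by rewrite /d; case: eqP => [->|_]; rewrite ?ge_min ?lexx ?orbT; lra.
have d_le_fr : fr != 0 -> d <= fr by rewrite /d => /negPf ->; rewrite ge_min lexx.
exists d => // m; have -> : t + m%:~R = fr + (Num.floor t + m)%:~R.
  by rewrite intrD /fr; ring.
move: (Num.floor t + m) => z.
have [z_ge1|z_lt1] := lerP 1 z.
  have : 1 <= (z%:~R : R) by rewrite ler1z.
  move=> ? _; rewrite ger0_norm; lra.
have [-> |z_neq0 _] := eqVneq z 0.
  by rewrite mulr0z addr0 => fr0; rewrite ger0_norm // d_le_fr.
have : (z%:~R : R) <= -1 by rewrite -(intrN _ 1) ler_int; lia.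
move=> ?; rewrite ler0_norm; lra.
Qed.

Lemma int_shifts_gap (t : nat -> R) (N : nat) : exists2 d : R, 0 < d &
  forall j, (j <= N)%N -> int_gap (t j) d.
Proof.
elim: N => [|N [d d_gt0 gapN]].
  have [d d_gt0 gap] := int_shift_gap (t 0%N).
  by exists d => // j; rewrite leqn0 => /eqP ->.
have [d' d'_gt0 gap'] := int_shift_gap (t N.+1).
exists (Num.min d d'); first by rewrite lt_min d_gt0.
move=> j; rewrite leq_eqVlt => /orP[/eqP -> m /gap'|/gapN gapj m /gapj].
  by rewrite ge_min => ->; rewrite orbT.
by rewrite ge_min => ->.
Qed.
End integer_translates.

Section preimages.
Variables (R : realType) (b : nat) (c y : R).
Hypothesis b_gt0 : (0 < b)%N.

Lemma iter_fbc n u : iter n (fbc b c) u = b%:R ^+ n * u + iter n (fbc b c) 0.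
Proof.
elim: n u => [|n IH] u /=; first by rewrite expr0 mul1r addr0.
by rewrite IH [in RHS]IH /fbc exprS; ring.
Qed.

Let bX_gt0 n : 0 < (b%:R : R) ^+ n.
Proof. by rewrite exprn_gt0 // ltr0n. Qed.

(* The lifts of the points of [f^-n(y)]:
   [iter n (fbc b c) (preimage_pt n k) = y + k]. *)
Definition preimage_pt n (k : int) : R :=
  (y + k%:~R - iter n (fbc b c) 0) / b%:R ^+ n.

Lemma preimage_pt_near n u k eps : `|iter n (fbc b c) u - y - k%:~R| < eps ->
  `|u - preimage_pt n k| < eps / b%:R ^+ n.
Proof.
have -> : iter n (fbc b c) u - y - k%:~R = b%:R ^+ n * (u - preimage_pt n k).
  by rewrite iter_fbc /preimage_pt; field; rewrite gt_eqF.
by rewrite normrM gtr0_norm // ltr_pdivlMr // mulrC.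
Qed.

Lemma preimage_pt_diff n j k k' :
  b%:R ^+ (n + j) * (preimage_pt (n + j) k' - preimage_pt n k) =
  y - iter j (fbc b c) y + (k' - (b ^ j)%:Z * k)%:~R.
Proof.
have iter_nj : iter (n + j) (fbc b c) 0 =
    b%:R ^+ j * iter n (fbc b c) 0 + iter j (fbc b c) 0.
  by rewrite addnC iterD iter_fbc.
have bj : ((b ^ j)%N%:~R : R) = b%:R ^+ j by rewrite -natrX.
rewrite /preimage_pt iter_nj (iter_fbc j y) intrB intrM bj exprD.
by field; rewrite !gt_eqF.
Qed.

Lemma preimage_pt_eq_of_near (N : nat) (d : R) n j k k' :
  (forall j, (j <= N)%N -> int_gap (y - iter j (fbc b c) y) d) ->
  (j <= N)%N ->
  `|preimage_pt (n + j) k' - preimage_pt n k| < d / b%:R ^+ (n + j) ->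
  preimage_pt (n + j) k' = preimage_pt n k.
Proof.
move=> gap jN near; apply/eqP; rewrite -subr_eq0.
have e := preimage_pt_diff n j k k'.
have [z|nz] := eqVneq (y - iter j (fbc b c) y + (k' - (b ^ j)%:Z * k)%:~R) 0.
  by move: e; rewrite z => /eqP; rewrite mulf_eq0 gt_eqF.
have := gap j jN _ nz; rewrite -e normrM gtr0_norm // mulrC.
by rewrite -ler_pdivrMr // leNgt near.
Qed.
End preimages.

Section schmidt_game.
Variable R : realType.

Lemma ball_le_mem (x : R) (w2 w1 : R * R) :
  `|x - w2.1| <= w2.2 -> ball_le w2 w1 -> `|x - w1.1| <= w1.2.
Proof.
rewrite /ball_le => xw2 w21; apply: le_trans (ler_distD w2.1 _ _) _.
by rewrite (distrC w2.1); lra.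
Qed.

Lemma bob_legal_center (K : set R) beta sigma omega n :
  bob_legal_upto K beta sigma omega n -> K (omega n).1.
Proof. by case: n => [[]//|n [_ [_ legal]]]; exact: (legal n (ltnSn n)).1. Qed.

Lemma alpha_winning_on_empty (K : set R) al (S : set R) :
  ~ (exists z, K z) -> alpha_winning_on K al S.
Proof.
move=> noK beta _ _; exists (fun=> (0, 0)); split.
  by move=> omega n [K0 _]; exfalso; apply: noK; exists (omega 0%N).1.
by move=> omega _ x Kx; exfalso; apply: noK; exists x.
Qed.

End schmidt_game.

Section strategy.
Variables (R : realType) (mu : {measure set R -> \bar R}).
Variables (C gam rho0 al beta L d : R) (phi : R -> R) (b N : nat) (c y : R).
Hypothesis mu_fin : locally_finite mu.
Hypothesis mu_decay : abs_decaying_upto mu C gam rho0.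
Hypothesis rho0_gt0 : 0 < rho0.
Hypothesis al_gt0 : 0 < al.
Hypothesis al_le : al <= 2^-1.
Hypothesis decay_al : C * (4 * al) `^ gam <= 1.
Hypothesis beta_gt0 : 0 < beta.
Hypothesis beta_lt1 : beta < 1.
Hypothesis L_gt0 : 0 < L.
Hypothesis phi_lip : forall u v, `|phi u - phi v| <= L * `|u - v|.
Hypothesis phi_colip : forall u v, `|u - v| <= L * `|phi u - phi v|.
Hypothesis phi_surj : forall w, exists u, phi u = w.
Hypothesis b_gt1 : (1 < b)%N.
Hypothesis bN : (al * beta)^-1 <= b%:R ^+ N.
Hypothesis d_gt0 : 0 < d.
Hypothesis d_gap : forall j, (j <= N)%N -> int_gap (y - iter j (fbc b c) y) d.

Let K := msupport mu.
Let q := preimage_pt b c y.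
Let b_gt0 : (0 < b)%N. Proof. exact: ltnW. Qed.
Let bX_gt0 n : 0 < (b%:R : R) ^+ n. Proof. by rewrite exprn_gt0 // ltr0n. Qed.
Let bV_le1 n : (b%:R : R) ^- n <= 1.
Proof. by rewrite invf_le1 // exprn_ege1 // ler1n ltnW. Qed.

(* Alice watches the scales [b^-n] in the window [(ka al beta rho, ka rho]]
   with [ka = kappa r1]: [kappa r1 >= 1/r1] puts every [b^-n <= 1] into the
   window of some step, [kappa >= 1/(al beta rho0)] keeps watched radii below
   [rho0], and the last term makes the threatening preimage unique. *)
Definition kappa (r1 : R) : R :=
  (al * beta * rho0)^-1 + r1^-1 + 4 * L / (d * al * beta).

Definition threat (ka z rho : R) n k :=
  ka * al * beta * rho < b%:R ^- n /\ b%:R ^- n <= ka * rho /\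
  `|phi (q n k) - z| <= 2 * rho.

Definition good_move (ka z rho w : R) :=
  K w /\ `|z - w| <= (1 - al) * rho /\
  forall n k, threat ka z rho n k -> 2 * al * rho <= `|w - phi (q n k)|.

(* When no good move exists (in a legal play, only if [rho > rho0]) Alice
   keeps the centre. *)
Definition alice : strategy R := fun s =>
  let z := (last (0, 0) s).1 in let rho := (last (0, 0) s).2 in
  (xget z (good_move (kappa (head (0, 0) s).2) z rho), al * rho).

Lemma kappa_bounds r1 : 0 < r1 -> [/\ (al * beta * rho0)^-1 <= kappa r1,
  r1^-1 <= kappa r1 & 4 * L / (d * al * beta) <= kappa r1].
Proof.
move=> r1_gt0; have ab_gt0 : 0 < al * beta by rewrite mulr_gt0.
have t1 : 0 < (al * beta * rho0)^-1 by rewrite invr_gt0 mulr_gt0.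
have t2 : 0 < r1^-1 by rewrite invr_gt0.
have t3 : 0 < 4 * L / (d * al * beta).
  by rewrite divr_gt0 ?mulr_gt0 // -mulrA mulr_gt0.
by rewrite /kappa; split; lra.
Qed.

(* Two threats at the same position come from scales [n <= n + j] with
   [b^-j > al beta], so [j <= N]; their preimages are [4 L rho]-close, which
   is below the gap [d b^-(n+j)] of [preimage_pt_eq_of_near]. *)
Lemma threat_preimage_le ka z rho n n' k k' :
  4 * L / (d * al * beta) <= ka -> 0 < rho ->
  threat ka z rho n k -> threat ka z rho n' k' -> (n <= n')%N -> q n' k' = q n k.
Proof.
move=> ka_ge rho_gt0 [_ [hi near]] [lo' [_ near']] /subnKC nn'.
move: lo' near'; rewrite -nn'; move: (n' - n)%N => j lo' near' {nn'}.
have := L_gt0; have := d_gt0; have := al_gt0; have := beta_gt0 => *.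
have dab_gt0 : 0 < d * al * beta by rewrite -mulrA !mulr_gt0.
have kaL : 4 * L <= ka * (d * al * beta) by rewrite -ler_pdivrMr.
have bD : b%:R ^- (n + j) = b%:R ^- n * b%:R ^- j :> R by rewrite exprD invfM.
have bVn_gt0 : 0 < (b%:R : R) ^- n by rewrite invr_gt0.
have ab_bj : al * beta < b%:R ^- j.
  rewrite -(ltr_pM2l bVn_gt0) -bD; apply: le_lt_trans lo'.
  have : b%:R ^- n * (al * beta) <= ka * rho * (al * beta) by rewrite ler_pM2r ?mulr_gt0.
  lra.
have jN : (j <= N)%N.
  have : (b%:R : R) ^+ j < b%:R ^+ N.
    have ab_gt0 : 0 < al * beta by rewrite mulr_gt0.
    apply: lt_le_trans bN; rewrite -(ltr_pM2l ab_gt0) mulfV ?gt_eqF //.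
    by rewrite -ltr_pdivlMr // mul1r.
  by rewrite -!natrX ltr_nat ltn_exp2l // => /ltnW.
apply: (preimage_pt_eq_of_near b_gt0 d_gap jN); apply: le_lt_trans (phi_colip _ _) _.
have : `|phi (q (n + j) k') - phi (q n k)| <= 4 * rho.
  by apply: le_trans (ler_distD z _ _) _; rewrite (distrC z); lra.
move=> /(ler_wpM2l (ltW L_gt0)) /le_lt_trans; apply.
have : ka * al * beta * rho * d < b%:R ^- (n + j) * d by rewrite ltr_pM2r.
have : 4 * L * rho <= ka * (d * al * beta) * rho by rewrite ler_pM2r.
lra.
Qed.

Lemma threat_preimage_unique ka z rho n n' k k' :
  4 * L / (d * al * beta) <= ka -> 0 < rho ->
  threat ka z rho n k -> threat ka z rho n' k' -> q n' k' = q n k.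
Proof.
move=> ka_ge rho_gt0 t t'; have [nn'|/ltnW n'n] := leqP n n'.
  exact: threat_preimage_le t t' nn'.
by symmetry; exact: threat_preimage_le t' t n'n.
Qed.

Lemma good_move_exists ka z rho : 4 * L / (d * al * beta) <= ka ->
  K z -> 0 < rho -> rho <= rho0 -> exists w, good_move ka z rho w.
Proof.
move=> ka_ge Kz rho_gt0 rho_le; have := al_le => *.
have [[n [k thr]]|nothr] := pselect (exists n k, threat ka z rho n k); last first.
  exists z; split=> //; split; first by rewrite subrr normr0 mulr_ge0 ?ltW //; lra.
  by move=> n k thr; exfalso; apply: nothr; exists n, k.
have [w [Kw [wz wp]]] :=
  support_escape mu_fin mu_decay al_gt0 decay_al (phi (q n k)) Kz rho_gt0 rho_le.
exists w; split=> //; split.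
  by rewrite distrC; apply: le_trans wz _; nra.
by move=> n' k' thr'; rewrite (threat_preimage_unique ka_ge rho_gt0 thr thr').
Qed.

Lemma alice_moveE omega k : alice_move alice omega k =
  (xget (omega k).1 (good_move (kappa (omega 0%N).2) (omega k).1 (omega k).2),
   al * (omega k).2).
Proof. by rewrite /alice_move /alice (last_nth (0, 0)) size_mkseq /= nth_mkseq. Qed.

Lemma play_radius omega n : bob_legal_upto K beta alice omega n ->
  forall j, (j <= n)%N -> (omega j).2 = (al * beta) ^+ j * (omega 0%N).2.
Proof.
move=> [_ [_ legal]]; elim=> [|j IH] jn; first by rewrite expr0 mul1r.
have [_ [_ ->]] := legal j jn; rewrite alice_moveE /= IH 1?ltnW //.
by rewrite exprS; ring.
Qed.

Lemma alice_legal_play : alice_legal K al beta alice.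
Proof.
move=> omega n legal; rewrite alice_moveE /ball_le /=.
have Kz := bob_legal_center legal.
have rho_ge0 : 0 <= (omega n).2.
  rewrite (play_radius legal (leqnn n)) mulr_ge0 ?exprn_ge0 ?mulr_ge0 ?ltW //.
  by case: legal => _ [].
have := al_le; have := al_gt0 => *.
case: xgetP => [w _ [Kw [zw _]]|_]; split=> //; split=> //; first by nra.
by rewrite subrr normr0 addr0 ler_piMl //; lra.
Qed.

Lemma threat_radius_le ka z rho n k : (al * beta * rho0)^-1 <= ka ->
  threat ka z rho n k -> 0 < rho -> rho <= rho0.
Proof.
move=> ka_ge [lo _] rho_gt0.
have abr_gt0 : 0 < al * beta * rho by rewrite !mulr_gt0.
have : (al * beta * rho0)^-1 * (al * beta * rho) < 1.
  apply: lt_le_trans (bV_le1 n); apply: le_lt_trans lo.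
  by rewrite (_ : ka * al * beta * rho = ka * (al * beta * rho)) ?ler_pM2r //; ring.
have -> : (al * beta * rho0)^-1 * (al * beta * rho) = rho / rho0.
  by field; rewrite !lt0r_neq0.
by rewrite ltr_pdivrMr // mul1r => /ltW.
Qed.

(* The scale [m] is chosen by [exists_geometric_bracket] so that [b^-n] falls
   in the window of step [m]; the lift [u] is then [eps b^-n]-close to a
   preimage, which [phi] turns into closeness [al rho_m / 2]. *)
Lemma threat_in_play omega u :
  (forall n, bob_legal_upto K beta alice omega n) ->
  (forall m, `|phi u - (omega m).1| <= (omega m).2) ->
  in_orbit_closure b c u y ->
  exists m n k, threat (kappa (omega 0%N).2) (omega m).1 (omega m).2 n k /\
    `|phi u - phi (q n k)| < al * (omega m).2 / 2.
Proof.
move=> legal u_in orb.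
set r0 := (omega 0%N).2; set ka := kappa r0.
have r0_gt0 : 0 < r0 by case: (legal 0%N) => _ [].
have [_ ka_r0 ka_L] := kappa_bounds r0_gt0.
have := al_gt0; have := al_le; have := beta_gt0; have := beta_lt1 => *.
have ka_gt0 : 0 < ka by apply: lt_le_trans ka_r0; rewrite invr_gt0.
have ab_gt0 : 0 < al * beta by rewrite mulr_gt0.
have ab_lt1 : al * beta < 1 by nra.
pose eps := al / (2 * L * ka).
have eps_gt0 : 0 < eps by rewrite divr_gt0 // !mulr_gt0.
have [n [k close]] := orb eps eps_gt0.
have u_near := preimage_pt_near b_gt0 close.
have bVn_gt0 : 0 < (b%:R : R) ^- n by rewrite invr_gt0.
have bVn_le : b%:R ^- n <= ka * r0.
  apply: le_trans (bV_le1 n) _; rewrite -ler_pdivrMr // mul1r //.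
have [m [lo hi]] := exists_geometric_bracket ab_gt0 ab_lt1 bVn_gt0 bVn_le.
have rm := play_radius (legal m) (leqnn m); rewrite -/r0 in rm.
have rm_lo : ka * al * beta * (omega m).2 < b%:R ^- n.
  by rewrite rm (_ : _ * _ = ka * r0 * (al * beta) ^+ m.+1) // exprSr; ring.
have rm_hi : b%:R ^- n <= ka * (omega m).2.
  by rewrite rm (_ : _ * _ = ka * r0 * (al * beta) ^+ m) //; ring.
have rm_gt0 : 0 < (omega m).2 by rewrite rm mulr_gt0 // exprn_gt0.
have near : `|phi u - phi (q n k)| < al * (omega m).2 / 2.
  apply: le_lt_trans (phi_lip _ _) _.
  have eps_ka : L * (eps * (ka * (omega m).2)) = al * (omega m).2 / 2.
    by rewrite /eps; field; rewrite !lt0r_neq0.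
  rewrite -eps_ka; apply: lt_le_trans (_ : _ < L * (eps / b%:R ^+ n)) _.
    by rewrite ltr_pM2l.
  by rewrite ler_pM2l // ler_pM2l.
exists m, n, k; split=> //; split=> //; split=> //.
apply: le_trans (ler_distD (phi u) _ _) _; rewrite distrC.
by have := u_in m; nra.
Qed.

Lemma alice_wins_play : alice_wins K beta alice (phi @` E_lift b c y `&` K).
Proof.
move=> omega legal x Kx x_in; split=> //.
have [u ux] := phi_surj x; subst x; exists u => // orb.
have [m [n [k [thr near]]]] := threat_in_play legal x_in orb.
have r0_gt0 : 0 < (omega 0%N).2 by case: (legal 0%N) => _ [].
have [ka_rho0 _ ka_L] := kappa_bounds r0_gt0.
have rm := play_radius (legal m) (leqnn m).
have rm_gt0 : 0 < (omega m).2 by rewrite rm mulr_gt0 // exprn_gt0 // mulr_gt0.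
have rm_le := threat_radius_le ka_rho0 thr rm_gt0.
have [_ [bob_in _]] := (legal m.+1).2.2 m (ltnSn m).
have x_alice := ball_le_mem (x_in m.+1) bob_in.
move: x_alice; rewrite alice_moveE /=; case: xgetP; last first.
  move=> nogood; have [w /nogood //] :=
    good_move_exists ka_L (bob_legal_center (legal m)) rm_gt0 rm_le.
move=> w _ [_ [_ /(_ n k thr) far]] x_w.
have := ler_distD (phi u) w (phi (q n k)); rewrite [`|w - phi u|]distrC.
have := al_gt0 => *; nra.
Qed.
End strategy.

Theorem corollary4p3 (R : realType) (mu : {measure set R -> \bar R})
    (C gam alpha : R) :
  0 < C -> 0 < gam ->
  locally_finite mu -> abs_decaying mu C gam ->
  0 < alpha -> alpha <= 4^-1 * ((3 * C)^-1) `^ (gam^-1) ->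
  forall phi : R -> R, bi_Lipschitz phi ->
  forall b : nat, (2 <= b)%N ->
  forall c y : R,
    alpha_winning_on (msupport mu) alpha (phi @` E_lift b c y).
Proof.
move=> _ gam_gt0 mu_fin decay al_gt0 al_le phi phi_bil b b_ge2 c y.
have [[z Kz]|noK] := pselect (exists z, msupport mu z); last first.
  exact: alpha_winning_on_empty.
move=> beta beta_gt0 beta_lt1.
have [decay_al al_le4] := small_alpha_bounds (abs_decaying_gt1 mu_fin decay Kz)
  gam_gt0 al_gt0 al_le.
have al_le2 : alpha <= 2^-1 by lra.
have [rho0 [rho0_gt0 mu_decay]] := decay.
have [L [L_ge1 [phi_lip phi_colip]]] := bi_Lipschitz_bounds phi_bil.
have L_gt0 : 0 < L by lra.
have [N bN] := exists_natX_ge (alpha * beta)^-1 b_ge2.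
have [d d_gt0 d_gap] := int_shifts_gap (fun j => y - iter j (fbc b c) y) N.
exists (alice mu rho0 alpha beta L d phi b c y); split.
  exact: alice_legal_play.
exact: (alice_wins_play mu_fin mu_decay rho0_gt0 al_gt0 al_le2 decay_al beta_gt0
  beta_lt1 L_gt0 phi_lip phi_colip (bi_Lipschitz_surj phi_bil) b_ge2 bN d_gt0 d_gap).
Qed.
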